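(* Let $k=\mathbb{F}_q$ with $q=2^m\geq 4$ and $n\geq 1$. Suppose $\sigma\in\mathrm{PGL}_{n+1}(k)$ induces a permutation of $\mathbb{P}^n(k)$ of order $2^r$, and for $i=0,\dots,r$ let $c_i$ be the number of $2^i$-cycles in its cycle decomposition (so $c_0$ is the number of fixed points). Then $c_0$ is odd and $c_1+\cdots+c_r$ is even. Moreover, if $n=1$, then exactly one of the following holds: (1) $c_0=q+1$ and $c_i=0$ for all $1\leq i\leq r$ (i.e. $\sigma$ acts as the identity); (2) $c_0=1$ and there is a unique $1\leq j\leq r$ with $c_j\neq 0$, and this $c_j$ equals $q/2^j>1$. *)

From HB Require Import structures.
From mathcomp Require Import all_boot all_order all_algebra all_field.
Set Implicit Arguments. Unset Strict Implicit. Unset Printing Implicit Defensive.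
Import GRing.Theory.
Local Open Scope ring_scope.

(* Projective space P^(k-1)(F) (use k = n.+1 for P^n): its points are the
   lines (1-dimensional subspaces) of the row space 'rV[F]_k, each line
   represented as the finite set of its vectors. *)
Definition proj_points (F : finFieldType) (k : nat) : {set {set 'rV[F]_k}} :=
  [set S | [exists v : 'rV[F]_k, (v != 0) && (S == [set a *: v | a : F])]].

(* The map on lines induced by a matrix A (acting on row vectors);
   for A invertible this is the permutation of P^(k-1)(F) induced by the
   class of A in PGL_k(F). *)
Definition proj_map (F : finFieldType) (k : nat) (A : 'M[F]_k)
  (S : {set 'rV[F]_k}) : {set 'rV[F]_k} := [set v *m A | v in S].

Definition is_perm_order (T : finType) (P : {set T}) (f : T -> T) (t : nat) : Prop :=
  (0 < t)%N /\ (forall x, x \in P -> iter t f x = x) /\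
  (forall s, (0 < s < t)%N -> exists x, x \in P /\ iter s f x <> x).

Definition cycle_count (T : finType) (P : {set T}) (f : T -> T) (l : nat) : nat :=
  #|[set [set y in P | fconnect f x y] | x in P & order f x == l]|.

(* Counting the points of P^n fixed by sigma^(2^j) orbit by orbit gives
   #Fix(sigma^(2^j)) = sum_(i <= j) c_i 2^i; for j = r this is
   #P^n = (q^(n+1) - 1)/(q - 1), which is odd, so c_0 is odd. In particular
   sigma fixes a line, i.e. A has an eigenvector x0 with eigenvalue mu. Since
   q - 1 is odd and sigma has 2-power order, comparing a fixed line v with the
   line of v + x0 shows that every line fixed by sigma^(2^j) lies in the
   mu^(2^j)-eigenspace of A^(2^j), which in characteristic 2 is the kernel of
   N^(2^j) with N = A + mu. Hence #Fix(sigma^(2^j)) = (q^(D_j) - 1)/(q - 1)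
   with D_j = dim ker N^(2^j), and c_j 2^j (q - 1) = q^(D_j) - q^(D_(j-1)).
   The kernels of the powers of N grow strictly until they stabilise, so
   D_(j-1) >= 2^(j-1) whenever c_j <> 0; then 2^(j+1) divides q^(D_(j-1)) and
   c_j is even. For n = 1 we have D_j in {1, 2}, D_r = 2, and D_0 = 1 unless
   sigma is the identity; stabilisation forces D_1 = 2, so c_1 = q/2 is the
   only nonzero c_j with j >= 1. *)

From HB Require Import structures.
From mathcomp Require Import all_boot all_order all_algebra all_field.
From mathcomp Require Import zify.
Set Implicit Arguments. Unset Strict Implicit. Unset Printing Implicit Defensive.
Import GRing.Theory.

(* [x * q.-1 = (q ^ k).-1] says that x = (q^k - 1)/(q - 1), the number of
   lines of a k-dimensional space over a field with q elements. *)
Lemma odd_of_mul_pred_expn q x k : ~~ odd q -> 0 < q -> 0 < k ->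
  x * q.-1 = (q ^ k).-1 -> odd x.
Proof.
move=> q_even q_gt0 k_gt0 /(congr1 odd).
rewrite oddM -!subn1 !oddB ?expn_gt0 ?q_gt0 // oddX (negbTE q_even) orbF.
by rewrite (gtn_eqF k_gt0) andbT.
Qed.

Lemma subn_mul_pred_expn q x y a b : 0 < q ->
  x * q.-1 = (q ^ a).-1 -> y * q.-1 = (q ^ b).-1 -> (y - x) * q.-1 = q ^ b - q ^ a.
Proof.
move=> q_gt0 ex ey; rewrite mulnBl ex ey.
have := expn_gt0 q a; have := expn_gt0 q b; rewrite q_gt0; lia.
Qed.

Lemma mul_pred_expn1 q x : 1 < q -> x * q.-1 = (q ^ 1).-1 -> x = 1.
Proof. move=> q_gt1; rewrite expn1; nia. Qed.

Lemma mul_pred_expn2 q x k : 1 < q -> k = 2 -> x * q.-1 = (q ^ k).-1 -> x = q.+1.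
Proof. move=> q_gt1 ->; rewrite expnS expn1; nia. Qed.

Lemma expn_eq_of_mul_pred q x a b : 1 < q ->
  x * q.-1 = (q ^ a).-1 -> x * q.-1 = (q ^ b).-1 -> a = b.
Proof.
move=> q_gt1 -> e; apply/eqP; rewrite -(eqn_exp2l _ _ q_gt1); apply/eqP.
have := expn_gt0 q a; have := expn_gt0 q b; rewrite (ltnW q_gt1) /=; lia.
Qed.

Lemma mul_pred_expn_diff q x : 1 < q -> x * q.-1 = q ^ 2 - q ^ 1 -> x = q.
Proof. move=> q_gt1; rewrite expnS !expn1; nia. Qed.

Lemma even_of_mul_pred_diff q m x j a b : q = 2 ^ m -> 1 < m -> a <= b ->
  (a < b -> 2 ^ j <= a) -> x * 2 ^ j.+1 * q.-1 = q ^ b - q ^ a -> ~~ odd x.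
Proof.
move=> -> m_gt1; rewrite leq_eqVlt => /orP[/eqP <- _|ab /(_ ab) ja].
  rewrite subnn => /eqP; rewrite !muln_eq0 expn_eq0 orbF -subn1 subn_eq0.
  by rewrite leqNgt -[1]/(2 ^ 0) ltn_exp2l ?(ltnW m_gt1) // orbF => /eqP ->.
(* 2^(j+2) divides (2^m)^a because m a >= 2^(j+1) >= j + 2. *)
have dvd_diff : 2 ^ j.+2 %| (2 ^ m) ^ b - (2 ^ m) ^ a.
  apply: dvdn_trans (dvdn_sub (dvdn_exp2l _ (ltnW ab)) (dvdnn _)).
  rewrite -expnM dvdn_exp2l // (leq_trans (ltn_expl j.+1 (isT : 1 < 2))) //.
  by rewrite expnS leq_mul.
move=> e; move: dvd_diff; rewrite -e Gauss_dvdl; last first.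
  by rewrite coprimeXl // coprime2n -subn1 oddB ?expn_gt0 // oddX orbF (gtn_eqF (ltnW m_gt1)).
by rewrite (expnS 2 j.+1) (mulnC 2) (mulnC x) dvdn_pmul2l ?expn_gt0 // dvdn2.
Qed.

Section PermutationCycles.
Variables (T : finType) (P : {set T}) (f : T -> T).
Hypotheses (f_inj : injective f) (f_stable : {in P, forall x, f x \in P}).

Local Notation orbit_set x := [set y in P | fconnect f x y].

Lemma iter_stable t : {in P, forall x, iter t f x \in P}.
Proof. by elim: t => // t IH x /IH /f_stable. Qed.

Lemma fconnect_stable x y : x \in P -> fconnect f x y -> y \in P.
Proof. by move=> xP /iter_findex <-; apply: iter_stable. Qed.

Lemma orbit_set_id x : x \in P -> x \in orbit_set x.
Proof. by move=> xP; rewrite inE xP connect0. Qed.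

Lemma orbit_set_eq x y : fconnect f x y -> orbit_set y = orbit_set x.
Proof.
move=> xy; apply/setP => z; rewrite !inE.
by rewrite (same_connect (fconnect_sym f_inj) xy).
Qed.

Lemma card_orbit_set x : x \in P -> #|orbit_set x| = order f x.
Proof.
move=> xP; apply: eq_card => y; rewrite inE andb_idl //.
exact: fconnect_stable.
Qed.

Lemma cycle_count_mul l :
  cycle_count P f l * l = #|[set x in P | order f x == l]|.
Proof.
rewrite -sum1_card (partition_big (fun x => orbit_set x)
  (mem [set orbit_set x | x in P & order f x == l])) /=; last first.
  by move=> x xl; apply/imsetP; exists x.
rewrite /cycle_count -sum_nat_const; apply: eq_bigr => O /imsetP[x].
rewrite inE => /andP[xP /eqP ox] ->.
transitivity #|orbit_set x|; first by rewrite card_orbit_set.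
rewrite sum1_card; apply: eq_card => y; rewrite [RHS]inE /= !inE.
apply/idP/idP => [/andP[yP xy]|/andP[/andP[yP _] /eqP e]].
  have same_xy := same_connect (fconnect_sym f_inj) xy.
  by rewrite yP (orbit_set_eq xy) -ox /order (eq_card same_xy) !eqxx.
by have := orbit_set_id yP; rewrite e inE.
Qed.

Lemma iter_order_dvdn t x : (iter t f x == x) = (order f x %| t).
Proof.
have iter_mod : iter t f x = iter (t %% order f x) f x.
  rewrite {1}(divn_eq t (order f x)) addnC iterD; congr iter.
  by elim: (t %/ order f x) => // d IH; rewrite mulSn iterD IH iter_order.
rewrite iter_mod /dvdn; apply/eqP/eqP => [fix_x|->] //.
by rewrite -(findex_iter (ltn_pmod t (order_gt0 f x))) fix_x findex0.
Qed.

Variables (p r : nat).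
Hypotheses (p_prime : prime p) (f_order : {in P, forall x, iter (p ^ r) f x = x}).

Lemma order_expn x : x \in P -> exists2 j, j <= r & order f x = p ^ j.
Proof. by move=> /f_order/eqP; rewrite iter_order_dvdn => /dvdn_pfactor[]// j; exists j. Qed.

Lemma iter_fixed_coprime t s x :
  x \in P -> coprime p s -> iter (t * s) f x = x -> iter t f x = x.
Proof.
move=> xP ps /eqP fix_ts; apply/eqP; have [j _ ox] := order_expn xP.
by move: fix_ts; rewrite !iter_order_dvdn ox Gauss_dvdl // coprimeXl.
Qed.

Lemma card_fixed_iter_expn k :
  #|[set x in P | iter (p ^ k) f x == x]| =
  \sum_(i < k.+1) cycle_count P f (p ^ i) * p ^ i.
Proof.
have p_gt1 := prime_gt1 p_prime.
have fixedE i x : order f x = p ^ i -> forall j, (iter (p ^ j) f x == x) = (i <= j).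
  by move=> ox j; rewrite iter_order_dvdn ox dvdn_Pexp2l.
elim: k => [|k IH].
  rewrite big_ord1 cycle_count_mul; apply: eq_card => x; rewrite !inE.
  case xP: (x \in P) => //=; have [i _ ox] := order_expn xP.
  by rewrite -[f x]/(iter (p ^ 0) f x) (fixedE _ _ ox) ox eqn_exp2l // leqn0.
rewrite big_ord_recr /= -IH cycle_count_mul.
rewrite -(cardsID [set x in P | iter (p ^ k) f x == x]); congr addn; apply: eq_card => x.
  rewrite !inE; case xP: (x \in P) => //=; have [i _ ox] := order_expn xP.
  by rewrite !(fixedE _ _ ox); apply/andP/idP => [[]|ik] //; split=> //; apply: leqW.
rewrite !inE; case xP: (x \in P); rewrite ?andbF //=; have [i _ ox] := order_expn xP.
by rewrite !(fixedE _ _ ox) ox eqn_exp2l // -ltnNge andbC -eqn_leq.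
Qed.
End PermutationCycles.

Local Open Scope ring_scope.

Section Lines.
Variables (F : finFieldType) (k : nat).
Local Notation V := 'rV[F]_k.
Local Notation P := (proj_points F k).

Definition line (v : V) : {set V} := [set a *: v | a : F].

Lemma line_id v : v \in line v.
Proof. by apply/imsetP; exists 1; rewrite ?scale1r. Qed.

Lemma line0_mem v : 0 \in line v.
Proof. by apply/imsetP; exists 0; rewrite ?scale0r. Qed.

Lemma line_scale c v : c != 0 -> line (c *: v) = line v.
Proof.
move=> c_neq0; apply/setP => x; apply/imsetP/imsetP => -[a _ ->].
  by exists (a * c); rewrite ?scalerA.
by exists (a / c); rewrite ?scalerA ?mulfVK.
Qed.

Lemma line_eq u v : line u = line v -> exists a, u = a *: v.
Proof.
move=> e; have /imsetP[a _ ->] : u \in line v by rewrite -e line_id.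
by exists a.
Qed.

Lemma proj_pointsP L : reflect (exists2 v, v != 0 & L = line v) (L \in P).
Proof.
rewrite inE; apply: (iffP existsP) => [[v /andP[v0 /eqP ->]]|[v v0 ->]].
  by exists v.
by exists v; rewrite v0 eqxx.
Qed.

Lemma line_proj_point v : v != 0 -> line v \in P.
Proof. by move=> v0; apply/proj_pointsP; exists v. Qed.

Lemma card_line v : v != 0 -> #|line v| = #|F|.
Proof.
move=> v0; apply: card_imset => a b /eqP; rewrite -subr_eq0 -scalerBl.
by rewrite scaler_eq0 (negbTE v0) orbF subr_eq0 => /eqP.
Qed.

Lemma line_subv (W : {vspace V}) v : (line v \subset W) = (v \in W).
Proof.
apply/subsetP/idP => [|vW _ /imsetP[a _ ->]]; last exact: memvZ.
by apply; apply: line_id.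
Qed.

Lemma card_lines_subv (W : {vspace V}) :
  (#|[set L in P | L \subset W]| * #|F|.-1 = (#|F| ^ \dim W).-1)%N.
Proof.
rewrite -card_vspace (cardD1 0 W) mem0v add1n succnK -[#|[predD1 W & 0]|]sum1_card.
rewrite (partition_big line (mem [set L in P | L \subset W])) /=; last first.
  by move=> v /andP[v0 vW]; rewrite inE line_proj_point // line_subv.
rewrite -sum_nat_const; apply: eq_bigr => _ /setIdP[/proj_pointsP[v v0 ->] vW].
rewrite sum1_card -(card_line v0) (cardD1 0) line0_mem /=; apply: eq_card => x.
rewrite [RHS]inE /= !inE -andbA; apply: andb_id2l => x_neq0.
apply/idP/andP => [/[dup] xv /imsetP[a _ x_av]|[_ /eqP <-]]; last exact: line_id.
rewrite (subsetP vW) // x_av line_scale //; apply: contraNneq x_neq0 => a0.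
by rewrite x_av a0 scale0r.
Qed.

Lemma card_proj_points : (#|P| * #|F|.-1 = (#|F| ^ k).-1)%N.
Proof.
have dimV : \dim (fullv : {vspace V}) = k by rewrite dimvf dim_matrix mul1r.
rewrite -[k in (_ ^ k)%N]dimV -card_lines_subv; congr muln; apply: eq_card => L.
by rewrite inE andb_idr // => _; apply/subsetP => v _; apply: memvf.
Qed.

End Lines.

Section ProjMap.
Variables (F : finFieldType) (k : nat) (A : 'M[F]_k).
Hypothesis A_unit : A \in unitmx.
Local Notation P := (proj_points F k).
Local Notation sigma := (proj_map A).

Lemma proj_map_line v : sigma (line v) = line (v *m A).
Proof.
apply/setP => x; apply/imsetP/imsetP => [[_ /imsetP[a _ ->] ->]|[a _ ->]].
  by exists a; rewrite ?scalemxAl.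
by exists (a *: v); rewrite ?scalemxAl //; apply/imsetP; exists a.
Qed.

Lemma iter_proj_map_line t v : iter t sigma (line v) = line (v *m A ^+ t).
Proof.
elim: t => [|t IH]; first by rewrite expr0 mulmx1.
by rewrite iterS IH proj_map_line exprSr -mulmxE mulmxA.
Qed.

Lemma proj_map_inj : injective sigma.
Proof. exact/imset_inj/(can_inj (mulmxK A_unit)). Qed.

Lemma proj_map_stable : {in P, forall L, sigma L \in P}.
Proof.
move=> _ /proj_pointsP[v v0 ->]; rewrite proj_map_line line_proj_point //.
by rewrite mulmx_free_eq0 ?row_free_unit.
Qed.

End ProjMap.

Lemma pchar_mx (F : fieldType) n p : p \in [pchar F] -> p \in [pchar 'M[F]_n.+1].
Proof.
case/andP=> p_prime /eqP p0; rewrite inE p_prime /=.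
by rewrite -(rmorph_nat (@scalar_mx F n.+1)) p0 raddf0.
Qed.

Lemma exprD_pchar_comm (R : nzRingType) p (x y : R) k :
  p \in [pchar R] -> GRing.comm x y -> (x + y) ^+ (p ^ k) = x ^+ (p ^ k) + y ^+ (p ^ k).
Proof.
move=> pR cxy; elim: k => [|k IH]; first by rewrite !expr1.
rewrite expnSr !exprM IH -!(pFrobenius_autE pR) pFrobenius_autD_comm //.
exact/commrX/commr_sym/commrX/commr_sym.
Qed.

Lemma expf_card_pred (F : finFieldType) (a : F) : a != 0 -> a ^+ #|F|.-1 = 1.
Proof.
move=> a0; apply: (mulIf a0); rewrite mul1r -exprSr prednK ?expf_card //.
by apply/card_gt0P; exists 0.
Qed.

Section KernelChain.
Variables (K : fieldType) (k : nat) (N : 'M[K]_k).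

Definition kerX j : {vspace 'rV[K]_k} := lker (linfun (mulmxr (N ^+ j))).

Lemma mem_kerX j v : (v \in kerX j) = (v *m N ^+ j == 0).
Proof. by rewrite memv_ker lfunE. Qed.

Lemma kerX_mono : {homo kerX : i j / (i <= j)%N >-> (i <= j)%VS}.
Proof.
move=> i j ij; apply/subvP => v; rewrite !mem_kerX => /eqP vi.
by rewrite -(subnKC ij) exprD -mulmxE mulmxA vi mul0mx.
Qed.

Lemma kerX_stable i : kerX i.+1 = kerX i -> forall j, (i <= j)%N -> kerX j = kerX i.
Proof.
move=> eq_i; elim=> [|j IH]; first by rewrite leqn0 => /eqP ->.
rewrite leq_eqVlt ltnS => /orP[/eqP <- // | ij]; rewrite -(IH ij).
apply/eqP; rewrite eqEsubv (kerX_mono (leqnSn j)) andbT.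
apply/subvP => v /[!mem_kerX] vj1.
have : v *m N ^+ (j - i) \in kerX i.+1.
  by rewrite mem_kerX -mulmxA mulmxE -exprD addnS subnK.
by rewrite eq_i mem_kerX -mulmxA mulmxE -exprD subnK.
Qed.

Lemma kerX_dim_stable i j : (i < j)%N -> \dim (kerX i) = \dim (kerX j) ->
  forall l, (i <= l)%N -> kerX l = kerX i.
Proof.
move=> ij dim_ij; apply: kerX_stable; apply/eqP.
by rewrite eq_sym eqEdim kerX_mono //= dim_ij dimvS // kerX_mono.
Qed.

Lemma kerX_dim_ge i : (i <= \dim (kerX i))%N \/ kerX i.+1 = kerX i.
Proof.
elim: i => [|i IH]; first by left.
have [e|ne] := eqVneq (kerX i.+1) (kerX i).
  by right; rewrite (kerX_stable e (leqW (leqnSn i))) e.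
case: IH => [IH|e]; last by rewrite e eqxx in ne.
left; apply: leq_ltn_trans IH _; rewrite ltnNge; apply: contra ne => le.
by rewrite eq_sym eqEdim kerX_mono.
Qed.

End KernelChain.

Lemma eigenvector_expr (R : pzRingType) k (B : 'M[R]_k) (u : 'rV_k) a j :
  u *m B = a *: u -> u *m B ^+ j = a ^+ j *: u.
Proof.
move=> uB; elim: j => [|j IH]; first by rewrite expr0 mulmx1 scale1r.
by rewrite exprSr -mulmxE mulmxA IH -scalemxAl uB scalerA -exprSr.
Qed.

Lemma eigenvalue_eq_of_eigen_add (K : fieldType) k (B : 'M[K]_k) (u v : 'rV_k) a b c :
  v != 0 -> u *m B = a *: u -> v *m B = b *: v -> (u + v) *m B = c *: (u + v) ->
  u *m B = b *: u.
Proof.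
move=> v0 uB vB uvB.
have comb : (a - c) *: u = (c - b) *: v.
  move: uvB; rewrite mulmxDl uB vB scalerDr !scalerBl => e.
  apply: (addIr (b *: v + c *: u)); rewrite addrACA addNr addr0 e addrC.
  by rewrite addrA subrK.
have [ac|ac] := eqVneq a c.
  move: comb; rewrite ac subrr scale0r => /esym/eqP.
  by rewrite scaler_eq0 (negbTE v0) orbF subr_eq0 => /eqP cb; rewrite uB ac cb.
have -> : u = ((c - b) / (a - c)) *: v.
  by rewrite mulrC -scalerA -comb scalerA mulVf ?scale1r // subr_eq0.
by rewrite -scalemxAl vB !scalerA mulrC.
Qed.

Section FixedLines.
Variables (F : finFieldType) (n r : nat) (A : 'M[F]_n.+1).
Hypotheses (A_unit : A \in unitmx) (card_pred_odd : odd #|F|.-1).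
Local Notation P := (proj_points F n.+1).
Local Notation sigma := (proj_map A).
Hypothesis sigma_order : {in P, forall L, iter (2 ^ r) sigma L = L}.
Variables (x0 : 'rV[F]_n.+1) (mu : F).
Hypotheses (x0_neq0 : x0 != 0) (x0_eigen : x0 *m A = mu *: x0).

Lemma eigenvalue_neq0 : mu != 0.
Proof.
apply: contraNneq x0_neq0 => mu0; move/eqP: x0_eigen.
by rewrite mu0 scale0r mulmx_free_eq0 ?row_free_unit.
Qed.

Lemma fixed_line_eigen t v : v != 0 -> iter t sigma (line v) = line v ->
  v *m A ^+ t = mu ^+ t *: v.
Proof.
move=> v0; rewrite iter_proj_map_line => /line_eq[a va].
have a0 : a != 0.
  apply: contraNneq v0 => a0; move/eqP: va; rewrite a0 scale0r.
  by rewrite mulmx_free_eq0 // row_free_unit unitrX.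
have x0t := eigenvector_expr t x0_eigen.
have [c sum_eigen] : exists c, (v + x0) *m A ^+ t = c *: (v + x0).
  have [->|s0] := eqVneq (v + x0) 0; first by exists 0; rewrite mul0mx scale0r.
  (* sigma^(t (q - 1)) fixes the line of v + x0; as the order of that line is
     a power of 2 and q - 1 is odd, sigma^t fixes it too. *)
  have fixed_ts : iter (t * #|F|.-1) sigma (line (v + x0)) = line (v + x0).
    rewrite iter_proj_map_line exprM mulmxDl.
    rewrite (eigenvector_expr _ va) (eigenvector_expr _ x0t) !expf_card_pred ?scale1r //.
    by rewrite expf_neq0 // eigenvalue_neq0.
  have := iter_fixed_coprime (proj_map_inj A_unit) (isT : prime 2) sigma_order
    (line_proj_point s0) _ fixed_ts.
  by rewrite coprime2n card_pred_odd iter_proj_map_line => /(_ isT)/line_eq.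
exact: eigenvalue_eq_of_eigen_add x0_neq0 va x0t sum_eigen.
Qed.

Hypothesis F_pchar2 : 2 \in [pchar F].
Local Notation N := (A + mu%:M).

Lemma mem_kerX_eigen j v :
  (v \in kerX N (2 ^ j)) = (v *m A ^+ (2 ^ j) == mu ^+ (2 ^ j) *: v).
Proof.
rewrite mem_kerX (exprD_pchar_comm _ (pchar_mx _ F_pchar2)); last exact: scalar_mxC.
by rewrite -rmorphXn mulmxDr mul_mx_scalar addr_eq0 -scaleNr oppr_pchar2.
Qed.

Lemma fixed_line_kerX j v : v != 0 ->
  (iter (2 ^ j) sigma (line v) == line v) = (v \in kerX N (2 ^ j)).
Proof.
move=> v0; rewrite mem_kerX_eigen; apply/eqP/eqP => [|e]; first exact: fixed_line_eigen.
by rewrite iter_proj_map_line e line_scale // expf_neq0 // eigenvalue_neq0.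
Qed.

Lemma card_fixed_lines j :
  (#|[set L in P | iter (2 ^ j) sigma L == L]| * #|F|.-1 =
   (#|F| ^ \dim (kerX N (2 ^ j))).-1)%N.
Proof.
rewrite -card_lines_subv; congr muln; apply: eq_card => L; rewrite [LHS]inE [RHS]inE.
apply: andb_id2l => /proj_pointsP[v v0 ->].
by rewrite fixed_line_kerX // line_subv.
Qed.

End FixedLines.

Section TwoPowerOrderCorollary.
Variables (F : finFieldType) (m n r : nat) (A : 'M[F]_n.+1).
Hypotheses (card_F : #|F| = (2 ^ m)%N) (m_gt0 : (0 < m)%N) (A_unit : A \in unitmx).
Local Notation q := #|F|.
Local Notation P := (proj_points F n.+1).
Local Notation sigma := (proj_map A).
Hypothesis sigma_order : {in P, forall L, iter (2 ^ r) sigma L = L}.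
Local Notation c i := (cycle_count P sigma (2 ^ i)).
Local Notation fixed j := #|[set L in P | iter (2 ^ j) sigma L == L]|.

Let q_gt1 : (1 < q)%N.
Proof. by rewrite card_F -{1}(expn0 2) ltn_exp2l. Qed.

Let q_even : ~~ odd q.
Proof. by rewrite card_F oddX orbF -lt0n. Qed.

Let q_pchar2 : 2 \in [pchar F].
Proof. exact: card_finPcharP card_F _. Qed.

Let q_pred_odd : odd q.-1.
Proof. by rewrite -subn1 oddB 1?ltnW // (negbTE q_even). Qed.

Lemma fixed_cycle_count j : fixed j = (\sum_(i < j.+1) c i * 2 ^ i)%N.
Proof.
exact: (@card_fixed_iter_expn _ P sigma (proj_map_inj A_unit) (proj_map_stable A_unit)
  2 r isT sigma_order j).
Qed.

Lemma fixed_order : fixed r = #|P|.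
Proof.
apply: eq_card => L; rewrite [LHS]inE.
by case LP : (L \in P); rewrite //= sigma_order ?eqxx.
Qed.

Lemma cycle_count0_order0 : r = 0%N -> c 0 = #|P|.
Proof. by move=> r0; have := fixed_order; rewrite r0 fixed_cycle_count big_ord1 expn0 muln1. Qed.

Lemma card_proj_points_odd : odd #|P|.
Proof. exact: odd_of_mul_pred_expn q_even (ltnW q_gt1) (ltn0Sn n) (card_proj_points F n.+1). Qed.

Lemma cycle_count0_odd : odd (c 0).
Proof.
have := card_proj_points_odd; rewrite -fixed_order fixed_cycle_count big_ord_recl expn0 muln1.
rewrite oddD (_ : odd (\sum_(i < r) _) = false) ?addbF //; apply/negbTE.
by apply: (big_ind (fun x => ~~ odd x)) => // [x y /negbTE ox /negbTE oy | i _];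
  rewrite ?oddD ?ox ?oy // oddM oddX /= andbF.
Qed.

Lemma exists_eigenvector :
  exists x0 : 'rV_n.+1, exists2 mu, x0 != 0 & x0 *m A = mu *: x0.
Proof.
have : (0 < fixed 0)%N by rewrite fixed_cycle_count big_ord1 expn0 muln1 odd_gt0 ?cycle_count0_odd.
case/card_gt0P => _ /setIdP[/proj_pointsP[v v0 ->]].
rewrite iter_proj_map_line expn0 expr1 => /eqP/line_eq[mu e].
by exists v, mu.
Qed.

Section Eigenvector.
Variables (x0 : 'rV[F]_n.+1) (mu : F).
Hypotheses (x0_neq0 : x0 != 0) (x0_eigen : x0 *m A = mu *: x0).
Local Notation D j := (\dim (kerX (A + mu%:M) (2 ^ j))).

Let fixed_dim j : (fixed j * q.-1 = (q ^ D j).-1)%N.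
Proof. exact (card_fixed_lines A_unit q_pred_odd sigma_order x0_neq0 x0_eigen q_pchar2 j). Qed.

Let D_mono i j : (i <= j)%N -> (D i <= D j)%N.
Proof. by move=> ij; apply/dimvS/kerX_mono; rewrite leq_exp2l. Qed.

Let D_stable j : D j.+1 = D j -> forall i, (j <= i)%N -> D i = D j.
Proof.
by move=> e i ji; rewrite (kerX_dim_stable _ (esym e)) ?leq_exp2l ?ltn_exp2l.
Qed.

Let D_ge j : (D j < D j.+1)%N -> (2 ^ j <= D j)%N.
Proof.
move=> lt; have [//|e] := kerX_dim_ge (A + mu%:M) (2 ^ j).
by rewrite (kerX_stable e (j := 2 ^ j.+1)) ?ltnn ?leq_exp2l in lt.
Qed.

Lemma cycle_count_dim j : (c j.+1 * 2 ^ j.+1 * q.-1 = q ^ D j.+1 - q ^ D j)%N.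
Proof.
have -> : (c j.+1 * 2 ^ j.+1 = fixed j.+1 - fixed j)%N.
  by rewrite !fixed_cycle_count [in X in (X - _)%N]big_ord_recr addKn.
exact: subn_mul_pred_expn (ltnW q_gt1) (fixed_dim j) (fixed_dim j.+1).
Qed.

Lemma cycle_count_even_of_eigen j : (1 < m)%N -> ~~ odd (c j.+1).
Proof.
move=> m_gt1.
exact (even_of_mul_pred_diff card_F m_gt1 (D_mono (leqnSn j)) (@D_ge j) (cycle_count_dim j)).
Qed.

Let D_le j : (D j <= n.+1)%N.
Proof. by have := dimvS (subvf (kerX (A + mu%:M) (2 ^ j))); rewrite dimvf dim_matrix mul1r. Qed.

Let D_order : D r = n.+1.
Proof.
have := fixed_dim r; rewrite fixed_order => e.
exact: expn_eq_of_mul_pred q_gt1 e (card_proj_points F n.+1).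
Qed.

Let D0_gt0 : (0 < D 0)%N.
Proof.
rewrite lt0n dimv_eq0; apply: contraNneq x0_neq0 => ker0.
have : x0 \in kerX (A + mu%:M) (2 ^ 0) by rewrite mem_kerX_eigen // expn0 !expr1 x0_eigen.
by rewrite ker0 memv0.
Qed.

Let D0_lt : (exists2 L, L \in P & sigma L <> L) -> (D 0 < n.+1)%N.
Proof.
move=> nontriv; rewrite ltn_neqAle D_le andbT; apply/eqP => e.
have : (fixed 0 < #|P|)%N.
  apply: proper_card; apply/properP; split; first by apply/subsetP => L /setIdP[].
  by have [L LP fixL] := nontriv; exists L => //; apply/negP => /setIdP[_ /eqP].
suff -> : fixed 0 = #|P| by rewrite ltnn.
apply/eqP; rewrite -(eqn_pmul2r (_ : 0 < q.-1)%N) -?subn1 ?subn_gt0 //.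
by rewrite subn1 fixed_dim e card_proj_points.
Qed.

Lemma proj_line_cycle_counts_of_eigen : n = 1%N -> (exists2 L, L \in P & sigma L <> L) ->
  [/\ c 0 = 1%N, (c 1 * 2 = q)%N & forall i, (1 < i)%N -> c i = 0%N].
Proof.
move=> n1 nontriv.
have D0 : D 0 = 1%N by have := D0_lt nontriv; have := D0_gt0; lia.
have D1 : D 1 = 2%N.
  have [e|/eqP ne] := eqVneq (D 1) (D 0).
    by have := D_order; rewrite (D_stable e) // D0; lia.
  by have := D_mono (leq0n 1); have := D_le 1; lia.
have Di i : (0 < i)%N -> D i = 2%N.
  by move=> i_gt0; have := D_mono i_gt0; have := D_le i; lia.
split.
- have := fixed_dim 0; rewrite D0 fixed_cycle_count big_ord1 expn0 muln1.
  exact: mul_pred_expn1 q_gt1.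
- by have := cycle_count_dim 0; rewrite D1 D0; apply: mul_pred_expn_diff q_gt1.
- case=> [|[|j]] // _; have := cycle_count_dim j.+1; rewrite !Di // subnn.
  by have := expn_gt0 2 j.+2; nia.
Qed.

End Eigenvector.

Lemma cycle_count_even j : (1 < m)%N -> ~~ odd (c j.+1).
Proof.
have [x0 [mu x0_neq0 x0_eigen]] := exists_eigenvector.
exact: cycle_count_even_of_eigen x0_neq0 x0_eigen j.
Qed.

Lemma sum_cycle_count_even : (1 < m)%N -> ~~ odd (\sum_(1 <= i < r.+1) c i).
Proof.
move=> m_gt1; rewrite big_add1 /=; apply: (big_ind (fun x => ~~ odd x)) => //.
  by move=> x y /negbTE ox /negbTE oy; rewrite oddD ox oy.
by move=> i _; apply: cycle_count_even.
Qed.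

Lemma card_proj_line : n = 1%N -> #|P| = q.+1.
Proof. by move=> n1; apply: mul_pred_expn2 q_gt1 _ (card_proj_points F n.+1); rewrite n1. Qed.

Lemma proj_line_cycle_counts : n = 1%N -> (exists2 L, L \in P & sigma L <> L) ->
  [/\ c 0 = 1%N, (c 1 * 2 = q)%N & forall i, (1 < i)%N -> c i = 0%N].
Proof.
have [x0 [mu x0_neq0 x0_eigen]] := exists_eigenvector.
exact: proj_line_cycle_counts_of_eigen x0_neq0 x0_eigen.
Qed.

End TwoPowerOrderCorollary.

Theorem corollary3p6 (F : finFieldType) (m n r : nat)
  (hq : #|F| = (2 ^ m)%N) (hq4 : (4 <= 2 ^ m)%N) (hn : (1 <= n)%N)
  (A : 'M[F]_(n.+1)) (hA : A \in unitmx)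
  (hord : is_perm_order (proj_points F n.+1) (proj_map A) (2 ^ r)%N) :
  let c := fun i : nat => cycle_count (proj_points F n.+1) (proj_map A) (2 ^ i)%N in
  odd (c 0%N) /\ ~~ odd (\sum_(1 <= i < r.+1) c i)%N /\
  (n = 1%N ->
     let case1 := c 0%N = (2 ^ m).+1 /\ (forall i, (1 <= i <= r)%N -> c i = 0%N) in
     let case2 := c 0%N = 1%N /\
        exists j, [/\ (1 <= j <= r)%N, (c j * 2 ^ j)%N = (2 ^ m)%N, (1 < c j)%N &
                     forall i, (1 <= i <= r)%N -> i <> j -> c i = 0%N] in
     (case1 /\ ~ case2) \/ (~ case1 /\ case2)).
Proof.
move=> c; case: hord => _ [sigma_order nontriv].
have m_gt1 : (1 < m)%N by move: hq4; rewrite -[4%N]/(2 ^ 2)%N leq_exp2l.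
have m_gt0 := ltnW m_gt1.
have pow_gt1 : (1 < 2 ^ m)%N := leq_trans (isT : (2 <= 4)%N) hq4.
split; first exact (cycle_count0_odd hq m_gt0 hA sigma_order).
split; first exact (sum_cycle_count_even hq m_gt0 hA sigma_order m_gt1).
move=> n1 case1 case2.
have [r0|r_gt0] := posnP r.
  have c0 : c 0%N = (2 ^ m).+1.
    by rewrite -hq -(card_proj_line hq m_gt0 n1); exact (cycle_count0_order0 hA sigma_order r0).
  left; split; last by case; rewrite c0 => -[m0]; rewrite m0 in pow_gt1.
  by split=> // i /andP[i_gt0 i_le]; move: (leq_trans i_gt0 i_le); rewrite r0.
have [|L [LP moved]] := nontriv 1%N; first by rewrite /= -{1}(expn0 2) ltn_exp2l.
have [c0 c1 ci] : [/\ c 0%N = 1%N, (c 1 * 2 = 2 ^ m)%N & forall i, (1 < i)%N -> c i = 0%N].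
  by rewrite -hq; exact (proj_line_cycle_counts hq m_gt0 hA sigma_order n1 (ex_intro2 _ _ L LP moved)).
right; split; first by case=> + _; rewrite c0 => -[e]; rewrite -e in pow_gt1.
split=> //; exists 1%N; split=> //; first by move: c1 hq4; lia.
by move=> [|[|i]] //= _ _; apply: ci.
Qed.
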